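(* Let $P$ be a finite poset with an interval representation $\{[\ell(x),r(x)] : x\in P\}$ in which every interval has length $0$ or $1$ and no two elements are assigned the same interval. Let $Q$ be the subposet of elements assigned length-$1$ intervals, and partition $Q$ into antichains $A_1,\dots,A_t$ by successively removing minimal elements ($A_1$ the minimal elements of $Q$, $A_2$ the minimal elements of $Q\setminus A_1$, etc.). For $1\le i\le t$ let $p_i=\min\{r(x): x\in A_i\}$. Let $D_0$ be the set of length-$0$ elements $[c,c]$ with $c\le p_1$, $D_i$ (for $1\le i\le t-1$) those with $c\in(p_i,p_{i+1}]$, and $D_t$ those with $c>p_t$. Then: (a) a length-$1$ element belongs to $A_i$ if and only if its interval contains $p_i$; (b) every element of $A_{i+2}$ is greater in $P$ than every element of $D_i$, for $0\le i\le t-2$; (c) every element of $D_i$ is greater in $P$ than every element of $A_{i-1}$, for $2\le i\le t$; (d) every element of $A_j$ is greater in $P$ than every element of $A_i$ whenever $j\ge i+2$.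
   Context: Posets are finite and reflexive. An interval representation of a poset $P$ assigns to each element $x$ a closed bounded interval $[\ell(x), r(x)]$ (possibly degenerate) such that for distinct $x,y$, $x<y$ in $P$ if and only if $r(x)<\ell(y)$. *)

From mathcomp Require Import all_boot all_order all_algebra.
Set Implicit Arguments. Unset Strict Implicit. Unset Printing Implicit Defensive.
Import Order.TTheory GRing.Theory Num.Theory.
Local Open Scope ring_scope.

Definition is_partial_order (T : finType) (le : rel T) : Prop :=
  [/\ reflexive le, antisymmetric le & transitive le].

Definition plt (T : finType) (le : rel T) : rel T :=
  fun x y => (x != y) && le x y.

Definition interval_rep (R : realFieldType) (T : finType) (le : rel T)
    (l r : T -> R) : Prop :=
  (forall x, l x <= r x) /\
  (forall x y, x != y -> (plt le x y <-> r x < l y)).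

Definition minset_P (T : finType) (le : rel T) (S : {set T}) : {set T} :=
  [set x in S | [forall y in S, ~~ plt le y x]].

Definition Qset (R : realFieldType) (T : finType) (l r : T -> R) : {set T} :=
  [set x | r x - l x == 1].

(* peel n = Q minus A_1, ..., A_n *)
Fixpoint peel (R : realFieldType) (T : finType) (le : rel T) (l r : T -> R)
    (n : nat) : {set T} :=
  match n with
  | 0 => Qset l r
  | n'.+1 => peel le l r n' :\: minset_P le (peel le l r n')
  end.

Definition Alayer (R : realFieldType) (T : finType) (le : rel T) (l r : T -> R)
    (i : nat) : {set T} :=
  minset_P le (peel le l r i.-1).

Definition Dset (R : realFieldType) (T : finType) (l r : T -> R)
    (p : nat -> R) (t i : nat) : {set T} :=
  [set x | (r x == l x) &&
     (if i == 0%N then l x <= p 1%N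
      else if (i < t)%N then (p i < l x) && (l x <= p i.+1)
      else if i == t then p t < l x
      else false)].

From mathcomp Require Import all_boot all_order all_algebra.
From mathcomp Require Import zify lra.
Import Order.TTheory GRing.Theory Num.Theory.
Local Open Scope ring_scope.
Set Implicit Arguments. Unset Strict Implicit.

(* Throughout, [l x, r x] is an interval representation of P.  Every set
   peel k (= Q minus A_1, ..., A_k) consists of unit intervals, and for a set
   S of unit intervals whose leftmost interval is [a, a+1], the minimal
   elements of S are exactly those x with l x <= a + 1 (an element is minimal
   iff no interval of S ends strictly before it starts).  Hence
   p_i = a_i + 1 where a_i is the smallest left endpoint in peel (i-1), and
     A_i = {x in peel (i-1) | l x <= p_i},   peel i = {x in Q | p_i < l x},
   so the layers are cut out of Q by the increasing points p_1 < ... < p_t,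
   with the gap estimate p_i + 1 < p_(i+1).  Statements (a)-(d) then reduce
   to comparisons of endpoints: x < y in P as soon as r x < l y.
   Only the interval representation, the nonemptiness of A_1, ..., A_t and
   the definition of the p_i are used. *)

Lemma exists_argmin (R : realDomainType) (T : finType) (f : T -> R)
    (S : {set T}) :
  S != set0 -> exists2 z, z \in S & forall y, y \in S -> f z <= f y.
Proof.
case/set0Pn=> x0 x0S.
by case: (@arg_minP _ R T x0 (mem S) f x0S) => z zS zmin; exists z.
Qed.

Section IntervalOrder.

Variables (R : realFieldType) (T : finType) (le : rel T) (l r : T -> R).

Lemma peel_subQ k : peel le l r k \subset Qset l r.
Proof.
elim: k => [|k IH] /=; first exact: subxx.
exact: subset_trans (subsetDl _ _) IH.
Qed.

Hypothesis rep : interval_rep le l r.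

Lemma plt_of_endpoints x y : r x < l y -> plt le x y.
Proof.
move=> rxly; have [lr sep] := rep.
have xy : x != y by apply/eqP=> E; move: rxly (lr x); rewrite E; lra.
exact/(sep x y xy).
Qed.

Lemma peel_unit k x : x \in peel le l r k -> r x = l x + 1.
Proof.
move/(subsetP (peel_subQ k)).
by rewrite inE subr_eq addrC => /eqP.
Qed.

Lemma minset_unit (S : {set T}) (z : T) :
  (forall x, x \in S -> r x = l x + 1) ->
  z \in S -> (forall y, y \in S -> l z <= l y) ->
  forall x, (x \in minset_P le S) = (x \in S) && (l x <= l z + 1).
Proof.
have [_ sep] := rep; move=> unitS zS zmin x.
rewrite inE; case xS: (x \in S) => //=.
apply/forallP/idP=> [nobelow | xnear].
- have := nobelow z; rewrite zS /=.
  case: (eqVneq z x) => [->|zx]; first by rewrite lerDl ler01.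
  apply: contraR; rewrite -ltNge => far.
  by apply/(sep z x zx); rewrite (unitS z zS).
- move=> y; apply/implyP=> yS; apply/negP.
  case: (eqVneq y x) => [->|yx]; first by rewrite /plt eqxx.
  move/(sep y x yx); rewrite (unitS y yS) ltNge; apply/negP/negPn.
  by apply: le_trans xnear _; rewrite lerD2r zmin.
Qed.

Variables (t : nat) (p : nat -> R).
Hypothesis layer_ne : forall i, (0 < i <= t)%N -> Alayer le l r i != set0.
Hypothesis p_min : forall i, (0 < i <= t)%N ->
  (exists2 x, x \in Alayer le l r i & r x = p i) /\
  (forall x, x \in Alayer le l r i -> p i <= r x).

Lemma p_leftmost i : (0 < i <= t)%N ->
  exists2 z, z \in peel le l r i.-1 &
    (forall y, y \in peel le l r i.-1 -> l z <= l y) /\ p i = l z + 1.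
Proof.
move=> it.
have peel_ne : peel le l r i.-1 != set0.
  apply: contra (layer_ne it) => /eqP E.
  by apply/eqP/setP=> x; rewrite /Alayer E !inE.
have [z zS zmin] := exists_argmin l peel_ne; exists z => //; split=> //.
have minA := minset_unit (@peel_unit i.-1) zS zmin.
have [[x0 x0A rx0] rmin] := p_min it.
apply/eqP; rewrite eq_le; apply/andP; split.
  by rewrite -(peel_unit zS) rmin // /Alayer minA zS lerDl ler01.
move: x0A; rewrite /Alayer minA => /andP[x0S _].
by rewrite -rx0 (peel_unit x0S) lerD2r zmin.
Qed.

Lemma Alayer_cut i : (0 < i <= t)%N ->
  Alayer le l r i = [set x in peel le l r i.-1 | l x <= p i].
Proof.
move=> it; have [z zS [zmin ->]] := p_leftmost it.
by apply/setP=> x; rewrite /Alayer (minset_unit (@peel_unit i.-1) zS zmin) inE.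
Qed.

Lemma peel_cut k : (k <= t)%N ->
  peel le l r k = [set x in Qset l r | (k == 0%N) || (p k < l x)].
Proof.
elim: k => [|k IH] kt; first by apply/setP=> x; rewrite /= !inE andbT.
have [z zS [_ pz]] := @p_leftmost k.+1 kt.
have peelk := IH (ltnW kt).
have p_incr : k != 0%N -> p k < p k.+1.
  move=> k0; move: zS; rewrite peelk inE (negbTE k0) /= => /andP[_ pkz].
  by rewrite pz (lt_le_trans pkz) // lerDl ler01.
rewrite /= -/(Alayer le l r k.+1) (@Alayer_cut k.+1 kt) peelk.
apply/setP=> x; rewrite !inE /=; case: (r x - l x == 1) => //=.
case: (eqVneq k 0%N) => [->|k0] /=; first by rewrite andbT ltNge.
case: (ltP (p k) (l x)) => pkx /=; first by rewrite andbT ltNge.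
by apply/esym/negbTE; rewrite -leNgt (le_trans pkx) // ltW // p_incr.
Qed.

Lemma p_gap k : (0 < k)%N -> (k < t)%N -> p k + 1 < p k.+1.
Proof.
move=> k0 kt; have [z zS [_ pz]] := @p_leftmost k.+1 kt.
move: zS; rewrite /= (peel_cut (ltnW kt)) inE.
by rewrite eqn0Ngt k0 /= => /andP[_]; rewrite pz ltrD2r.
Qed.

Lemma p_mono i j : (0 < i)%N -> (i <= j <= t)%N -> p i <= p j.
Proof.
move=> i0; elim: j => [|j IH] /andP[ij jt]; first lia.
case: (eqVneq i j.+1) => [->//|ne].
have [j0 ijt] : (0 < j)%N /\ (i <= j <= t)%N by lia.
have := p_gap j0 jt; have := IH ijt; lra.
Qed.

Lemma Alayer_bounds i x : (0 < i <= t)%N -> x \in Alayer le l r i ->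
  [/\ r x = l x + 1, (i == 1%N) || (p i.-1 < l x), l x <= p i & p i <= r x].
Proof.
move=> it xA; have pr := (p_min it).2 x xA.
move: xA; rewrite (Alayer_cut it) inE => /andP[xS lp].
split=> //; first exact: peel_unit xS.
case: i it xS {lp pr} => [//|[//|i]] /andP[_ it] /=.
by rewrite -/(peel le l r i.+1) (peel_cut (ltnW it)) inE => /andP[].
Qed.

Lemma Alayer_iff i x : (0 < i <= t)%N -> r x - l x = 1 ->
  x \in Alayer le l r i <-> l x <= p i <= r x.
Proof.
move=> it unitx; split=> [/(Alayer_bounds it) [_ _ -> ->] //|/andP[lp pr]].
have xQ : x \in Qset l r by rewrite inE unitx.
rewrite (Alayer_cut it) inE lp andbT.
case: i it lp pr => [//|i] /andP[_ it] lp pr /=.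
rewrite (peel_cut (ltnW it)) inE xQ /=.
case: (eqVneq i 0%N) => //= i0.
have i_pos : (0 < i)%N by rewrite lt0n.
have := p_gap i_pos it; move: unitx; lra.
Qed.

Lemma Dset_upper i x : (i < t)%N -> x \in Dset l r p t i ->
  r x = l x /\ l x <= p i.+1.
Proof.
move=> it; rewrite inE => /andP[/eqP -> cond]; split=> //.
move: cond; case: (eqVneq i 0%N) => [->//|i0].
by rewrite it => /andP[].
Qed.

Lemma Dset_lower i x : (0 < i <= t)%N -> x \in Dset l r p t i ->
  r x = l x /\ p i < l x.
Proof.
move=> it; rewrite inE => /andP[/eqP -> cond]; split=> //.
move: cond; rewrite (_ : (i == 0%N) = false) /=; last lia.
case: (i < t)%N => [/andP[] //|].
by case: (eqVneq i t) => [->|].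
Qed.

End IntervalOrder.

Theorem mainTheorem8 (R : realFieldType) (T : finType) (le : rel T)
    (l r : T -> R) (t : nat) (p : nat -> R) :
  is_partial_order le ->
  interval_rep le l r ->
  (forall x, r x - l x = 0 \/ r x - l x = 1) ->
  (forall x y, l x = l y -> r x = r y -> x = y) ->
  (* t = number of antichains: A_1, ..., A_t nonempty, A_{t+1} empty *)
  (forall i, (0 < i <= t)%N -> Alayer le l r i != set0) ->
  Alayer le l r t.+1 = set0 ->
  (* p_i = min { r x : x in A_i } *)
  (forall i, (0 < i <= t)%N ->
     (exists2 x, x \in Alayer le l r i & r x = p i) /\
     (forall x, x \in Alayer le l r i -> p i <= r x)) ->
  (* (a) *)
  (forall i x, (0 < i <= t)%N -> r x - l x = 1 ->
     (x \in Alayer le l r i <-> l x <= p i <= r x)) /\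
  (* (b) *)
  (forall i x y, (i.+2 <= t)%N -> x \in Dset l r p t i ->
     y \in Alayer le l r i.+2 -> plt le x y) /\
  (* (c) *)
  (forall i x y, (2 <= i <= t)%N -> x \in Alayer le l r i.-1 ->
     y \in Dset l r p t i -> plt le x y) /\
  (* (d) *)
  (forall i j x y, (0 < i)%N -> (i.+2 <= j <= t)%N ->
     x \in Alayer le l r i -> y \in Alayer le l r j -> plt le x y).
Proof.
move=> _ rep _ _ ne _ pdef.
have bounds := Alayer_bounds rep ne pdef.
have gap := p_gap rep ne pdef.
split; [|split; [|split]].
- exact: Alayer_iff.
- move=> i x y it xD yA; apply: (plt_of_endpoints rep).
  have [-> lxp] := Dset_upper (ltnW it) xD.
  have [_ /= pl _ _] := bounds i.+2 y ltac:(lia) yA; lra.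
- move=> [|[|i]] // x y /andP[_ it] xA yD; apply: (plt_of_endpoints rep).
  have [-> _ lxp _] := bounds i.+1 x ltac:(lia) xA.
  have [_ pl] := Dset_lower (ltac:(lia) : (0 < i.+2 <= t)%N) yD.
  have := gap i.+1 isT it; lra.
- move=> i [//|j] x y i0 /andP[ij jt] xA yA; apply: (plt_of_endpoints rep).
  have [-> _ lxp _] := bounds i x ltac:(lia) xA.
  have [_ pl _ _] := bounds j.+1 y ltac:(lia) yA.
  rewrite (_ : (j.+1 == 1%N) = false) /= in pl; last lia.
  have := gap i i0 ltac:(lia).
  have := p_mono rep ne pdef (ltac:(lia) : (0 < i.+1)%N) (ltac:(lia) : (i.+1 <= j <= t)%N).
  lra.
Qed.
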